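(* Let $\mathcal{M}$, $(E_d)$ be as in the context and let $F=f^iE_i$ satisfy $\mathrm{Div}(F)=E_i[f^i]=0$. For any planar trees $t_1,\dots,t_p$ ($p\ge0$), the elementary differential of the aroma consisting of the single tree with a free edge $(t_1\cdots t_p\,\times)\curvearrowright\bullet$ vanishes: $$\mathcal{F}^F\big(((t_1\cdots t_p\,\times)\curvearrowright\bullet)_\circlearrowleft\big)=\sum_{i}\Big(\big(\mathcal{F}^F(t_1)\cdots\mathcal{F}^F(t_p)\,E_i\big)\rhd F\Big)^i=0.$$
   Context: Einstein summation is used. $\mathcal{M}$ is a smooth manifold with a global frame $E_1,\dots,E_n$ whose Jacobi brackets have constant structure constants. For vector fields $X_k=x_k^iE_i$, a function $\phi$ and $Y=y^jE_j$, the frozen product acts by $(X_1\cdots X_p)\rhd\phi=x_1^{i_1}\cdots x_p^{i_p}E_{i_1}[\cdots E_{i_p}[\phi]\cdots]$ and $(X_1\cdots X_p)\rhd Y=((X_1\cdots X_p)\rhd y^j)E_j$; $Z^i$ denotes the $i$-th frame component of a vector field $Z$. Planar rooted trees (one decoration $\bullet$): $(t_1\cdots t_p)\curvearrowright\bullet$ is the tree whose root has ordered children subtrees $t_1,\dots,t_p$. Elementary differentials: $\mathcal{F}^F(\bullet)=F$, $\mathcal{F}^F((t_1\cdots t_p)\curvearrowright\bullet)=(\mathcal{F}^F(t_1)\cdots\mathcal{F}^F(t_p))\rhd F$. For the tree with a free edge $u=(t_1\cdots t_p\,\times)\curvearrowright\bullet$ (root with children $t_1,\dots,t_p$ followed by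 an empty input $\times$), $\mathcal{F}^F(u)(X)=(\mathcal{F}^F(t_1)\cdots\mathcal{F}^F(t_p)X)\rhd F$, and the aroma $(u)_\circlearrowleft$ is mapped to the function $\mathcal{F}^F(u)^{i}(E_{i})$ (summed over $i$). *)

From HB Require Import structures.
From mathcomp Require Import all_boot all_order all_algebra.
From mathcomp Require Import reals.
Set Implicit Arguments. Unset Strict Implicit. Unset Printing Implicit Defensive.
Import Order.TTheory GRing.Theory Num.Theory.
Local Open Scope ring_scope.

(* Algebraic model of (M, E_1..E_n): A plays the role of C^oo(M) (a commutative
   R-algebra), E i : A -> A are the frame vector fields acting as R-linear
   derivations, whose brackets have constant structure constants c i j k. *)
Definition is_frame (R : realType) (A : comAlgType R) (n : nat)
  (E : 'I_n -> {linear A -> A}) (c : 'I_n -> 'I_n -> 'I_n -> R) : Prop :=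
  (forall i (f g : A), E i (f * g) = E i f * g + f * E i g) /\
  (forall i j (f : A), E i (E j f) - E j (E i f) = \sum_k c i j k *: E k f).

(* A vector field Z = Z^i E_i is represented by its frame components. *)
Definition vfield (A : Type) (n : nat) := 'I_n -> A.

Definition frame_vf (A : nzRingType) (n : nat) (i : 'I_n) : vfield A n :=
  fun j => if j == i then 1 else 0.

Section Frozen.
Variables (R : realType) (A : comAlgType R) (n : nat) (E : 'I_n -> {linear A -> A}).

(* frz [X_1;..;X_p] D phi = x_1^{i_1}..x_p^{i_p} D(E_{i_1}[..E_{i_p}[phi]..]) *)
Fixpoint frz (Xs : seq (vfield A n)) (D : A -> A) (phi : A) : A :=
  match Xs with
  | [::] => D phi
  | X :: Xs' => \sum_i X i * frz Xs' (fun psi => D (E i psi)) phi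
  end.

Definition frozen (Xs : seq (vfield A n)) (phi : A) : A := frz Xs id phi.

Definition frozen_vf (Xs : seq (vfield A n)) (Y : vfield A n) : vfield A n :=
  fun j => frozen Xs (Y j).

Definition Div (F : vfield A n) : A := \sum_i E i (F i).
End Frozen.

(* Planar rooted trees with one decoration: (t_1 ... t_p) ~> bullet *)
Inductive ptree : Type := PNode of seq ptree.

Section ElemDiff.
Variables (R : realType) (A : comAlgType R) (n : nat) (E : 'I_n -> {linear A -> A}).
Variable F : vfield A n.

Fixpoint ED (t : ptree) : vfield A n :=
  match t with PNode ts => frozen_vf E (map ED ts) F end.

(* Tree with free edge u = (t_1..t_p x) ~> bullet : X |-> (F(t_1)..F(t_p) X) |> F *)
Definition ED_free (ts : seq ptree) (X : vfield A n) : vfield A n :=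
  frozen_vf E (rcons (map ED ts) X) F.

Definition ED_aroma_free (ts : seq ptree) : A :=
  \sum_i ED_free ts (frame_vf A i) i.
End ElemDiff.

From HB Require Import structures.
From mathcomp Require Import all_boot all_order all_algebra.
From mathcomp Require Import reals.
Import Order.TTheory GRing.Theory Num.Theory.
Local Open Scope ring_scope.

(* The frozen product is symmetric in its factors, so a last factor E_i can be
   pulled out as an innermost derivation: (X_1 ... X_p E_i) |> phi is
   (X_1 ... X_p) |> E_i[phi].  As the frozen product is additive in phi, the
   aroma sums to (X_1 ... X_p) |> E_i[f^i] = (X_1 ... X_p) |> Div F = 0. *)

Section FrozenProduct.
Variables (R : realType) (A : comAlgType R) (n : nat) (E : 'I_n -> {linear A -> A}).

Lemma frz_rcons (Xs : seq (vfield A n)) (X : vfield A n) (D : A -> A) (phi : A) :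
  frz E (rcons Xs X) D phi = \sum_i X i * frz E Xs D (E i phi).
Proof.
elim: Xs D => [|Y Xs IH] D //=.
under eq_bigr => j _ do rewrite IH mulr_sumr.
rewrite exchange_big /=; apply: eq_bigr => i _.
by rewrite mulr_sumr; apply: eq_bigr => j _; rewrite mulrCA.
Qed.

Lemma sum_frame_vf (i : 'I_n) (a : 'I_n -> A) :
  \sum_j frame_vf A i j * a j = a i.
Proof.
rewrite (bigD1 i) //= big1 => [|j /negbTE nji]; last by rewrite /frame_vf nji mul0r.
by rewrite /frame_vf eqxx mul1r addr0.
Qed.

Lemma frz_rcons_frame (Xs : seq (vfield A n)) (i : 'I_n) (D : A -> A) (phi : A) :
  frz E (rcons Xs (frame_vf A i)) D phi = frz E Xs D (E i phi).
Proof. by rewrite frz_rcons sum_frame_vf. Qed.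

Lemma frz_zmod_morphism (Xs : seq (vfield A n)) (D : A -> A) :
  zmod_morphism D -> zmod_morphism (frz E Xs D).
Proof.
elim: Xs D => [|X Xs IH] D D_morph //= phi psi.
rewrite -sumrB; apply: eq_bigr => i _; rewrite -mulrBr IH //.
by move=> x y; rewrite /= raddfB D_morph.
Qed.

Lemma frozen_zmod_morphism (Xs : seq (vfield A n)) : zmod_morphism (frozen E Xs).
Proof. exact: frz_zmod_morphism. Qed.

HB.instance Definition _ (Xs : seq (vfield A n)) :=
  GRing.isZmodMorphism.Build A A (frozen E Xs) (frozen_zmod_morphism Xs).

End FrozenProduct.

Theorem lemma6p8 (R : realType) (A : comAlgType R) (n : nat)
  (E : 'I_n -> {linear A -> A}) (c : 'I_n -> 'I_n -> 'I_n -> R)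
  (F : vfield A n) (ts : seq ptree) :
  is_frame E c -> Div E F = 0 -> ED_aroma_free E F ts = 0.
Proof.
move=> _ divF0; rewrite /ED_aroma_free /ED_free /frozen_vf.
under eq_bigr => i _ do rewrite [frozen _ _ _]frz_rcons_frame -/(frozen _ _ _).
rewrite -raddf_sum -/(Div E F) divF0; exact: raddf0.
Qed.
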